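(* Let $\Gamma\rightrightarrows M$ be a Lie groupoid, $E$ a differentiable vector bundle over $M$ with a smooth metric $\phi$, and $\lambda$ a unital continuous pseudo-representation of $\Gamma$ on $E$ with $c(\lambda)<1$. Then for all $g\in\Gamma$, $\|\lambda(g)^{-1}\|\le\dfrac{b(\lambda)}{1-c(\lambda)}$, and for all $g,h$ with $sg=sh$, $\|\Delta^\lambda(g,h)\|\le c(\lambda)\dfrac{b(\lambda)}{1-c(\lambda)}$, with the convention $0\cdot\infty=0$.
   Context: A pseudo-representation is a family of linear maps $\lambda_g:E_{sg}\to E_{tg}$ forming a section of $L(s^*E,t^*E)$; unital means $\lambda_{1_x}=\mathrm{id}$. (Under the hypotheses each $\lambda_g$ is invertible.) Operator norms $\|\cdot\|$ on $L(E_x,E_y)$ are induced by $\phi$. $b(\lambda):=\sup_{g\in\Gamma}\|\lambda(g)\|$ and $c(\lambda):=\sup\{\|\lambda(g'g)-\lambda(g')\lambda(g)\|:sg'=tg\}$ (possibly infinite). $\Delta^\lambda(g,h):=\lambda_g\lambda_h^{-1}-\lambda_{gh^{-1}}:E_{th}\to E_{tg}$. *)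

From Stdlib Require Import Reals List.
Open Scope R_scope.

(* Finite-dimensional real inner-product spaces (the fibres E_x of a
   vector bundle equipped with a metric phi).                          *)
Record InnerSpace := {
  ips_car :> Type;
  ips_zero : ips_car;
  ips_add : ips_car -> ips_car -> ips_car;
  ips_opp : ips_car -> ips_car;
  ips_scal : R -> ips_car -> ips_car;
  ips_ip : ips_car -> ips_car -> R;
  ips_addA : forall u v w, ips_add u (ips_add v w) = ips_add (ips_add u v) w;
  ips_addC : forall u v, ips_add u v = ips_add v u;
  ips_add0 : forall u, ips_add u ips_zero = u;
  ips_addN : forall u, ips_add u (ips_opp u) = ips_zero;
  ips_scalA : forall a b u, ips_scal a (ips_scal b u) = ips_scal (a * b) u;
  ips_scal1 : forall u, ips_scal 1 u = u;
  ips_scalDr : forall a u v, ips_scal a (ips_add u v) = ips_add (ips_scal a u) (ips_scal a v);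
  ips_scalDl : forall a b u, ips_scal (a + b) u = ips_add (ips_scal a u) (ips_scal b u);
  ips_ipC : forall u v, ips_ip u v = ips_ip v u;
  ips_ipD : forall u v w, ips_ip (ips_add u v) w = ips_ip u w + ips_ip v w;
  ips_ipZ : forall a u v, ips_ip (ips_scal a u) v = a * ips_ip u v;
  ips_ip_ge0 : forall u, 0 <= ips_ip u u;
  ips_ip_eq0 : forall u, ips_ip u u = 0 -> u = ips_zero;
  ips_findim : exists basis : list ips_car, forall v, exists cs : list R,
      length cs = length basis /\
      v = fold_right (fun p acc => ips_add (ips_scal (fst p) (snd p)) acc)
                     ips_zero (combine cs basis)
}.

Arguments ips_zero {i}.
Arguments ips_add {i}.
Arguments ips_opp {i}.
Arguments ips_scal {i}.
Arguments ips_ip {i}.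

Definition vnorm {X : InnerSpace} (v : X) : R := sqrt (ips_ip v v).
Definition vsub {X : InnerSpace} (u v : X) : X := ips_add u (ips_opp v).

Definition is_linear {X Y : InnerSpace} (f : X -> Y) : Prop :=
  (forall u v, f (ips_add u v) = ips_add (f u) (f v)) /\
  (forall a u, f (ips_scal a u) = ips_scal a (f u)).

Definition is_opnorm {X Y : InnerSpace} (f : X -> Y) (r : R) : Prop :=
  is_lub (fun a => exists v : X, vnorm v <= 1 /\ a = vnorm (f v)) r.

Definition is_inverse {X Y : InnerSpace} (f : X -> Y) (L : Y -> X) : Prop :=
  (forall v, L (f v) = v) /\ (forall w, f (L w) = w).

(* Groupoids, presented by their hom-types: g : Hom x y means
   s g = x and t g = y; gcomp g' g is the product g'g (s g' = t g). *)
Record Groupoid (M : Type) := {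
  Hom : M -> M -> Type;
  gcomp : forall x y z, Hom y z -> Hom x y -> Hom x z;
  gid : forall x, Hom x x;
  ginv : forall x y, Hom x y -> Hom y x;
  gcompA : forall x y z w (h : Hom z w) (g : Hom y z) (f : Hom x y),
      gcomp x z w h (gcomp x y z g f) = gcomp x y w (gcomp y z w h g) f;
  gcomp1l : forall x y (g : Hom x y), gcomp x y y (gid y) g = g;
  gcomp1r : forall x y (g : Hom x y), gcomp x x y g (gid x) = g;
  gcompVl : forall x y (g : Hom x y), gcomp x y x (ginv x y g) g = gid x;
  gcompVr : forall x y (g : Hom x y), gcomp y x y g (ginv x y g) = gid y
}.

Arguments Hom {M} _ x y.
Arguments gcomp {M g x y z} : rename.
Arguments gid {M g} : rename.
Arguments ginv {M g x y} : rename.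

(* Extended nonnegative reals, for b(lambda), c(lambda) (possibly infinite) *)
Inductive ereal := EFin (r : R) | EPInf.

Definition ele (a b : ereal) : Prop :=
  match a, b with
  | _, EPInf => True
  | EPInf, EFin _ => False
  | EFin x, EFin y => x <= y
  end.

Definition emul (a b : ereal) : ereal :=
  match a, b with
  | EFin x, EFin y => EFin (x * y)
  | EFin x, EPInf | EPInf, EFin x => if Req_EM_T x 0 then EFin 0 else EPInf
  | EPInf, EPInf => EPInf
  end.

Definition ediv (a : ereal) (d : R) : ereal :=
  match a with EFin x => EFin (x / d) | EPInf => EPInf end.

Definition is_esup (S : R -> Prop) (e : ereal) : Prop :=
  match e with
  | EFin r => is_lub S r
  | EPInf => (exists a, S a) /\ ~ bound S
  end.

Section PR.
Context {M : Type} {G : Groupoid M} (E : M -> InnerSpace)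
        (lam : forall x y : M, Hom G x y -> E x -> E y).

Definition b_set : R -> Prop :=
  fun a => exists (x y : M) (g : Hom G x y), is_opnorm (lam x y g) a.

Definition c_set : R -> Prop :=
  fun a => exists (x y z : M) (g : Hom G x y) (g' : Hom G y z),
    is_opnorm (fun v => vsub (lam x z (gcomp g' g) v) (lam y z g' (lam x y g v))) a.

(* Delta(g,h) = lam_g lam_h^{-1} - lam_{g h^{-1}} : E_{th} -> E_{tg},
   where Lh is the inverse of lam_h *)
Definition DeltaL {x y z : M} (g : Hom G x y) (h : Hom G x z) (Lh : E z -> E x)
  : E z -> E y :=
  fun v => vsub (lam x y g (Lh v)) (lam z y (gcomp g (ginv h)) v).

End PR.

(* The defect [lam (g'g) - lam g' lam g] has norm at most [c < 1], and
   [lam (g^-1 g) = lam 1 = id], so [lam g^-1 lam g] and [lam g lam g^-1] are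
   within [c] of the identity and hence bounded below by [1 - c].  The first
   makes [lam g] injective, the second (by finite dimensionality) surjective.
   Writing [w = lam g (L w)] for the inverse [L] gives
   [(1 - c) |L w| <= |lam g^-1 w| <= b |w|], and writing [w = lam h (Lh w)]
   turns [Delta(g, h) w] into the defect of the pair [(g h^-1, h)] at [Lh w],
   whence the bound [c b / (1 - c)]. *)
From Stdlib Require Import Reals List Lia Lra Classical ClassicalEpsilon.
From Corelib Require Import ssreflect.
From mathcomp Require all_boot all_algebra Rstruct.
Open Scope R_scope.

Fixpoint sumR (n : nat) (F : nat -> R) : R :=
  match n with O => 0 | S m => sumR m F + F m end.

Lemma sumR_ext n F G : (forall i, (i < n)%nat -> F i = G i) -> sumR n F = sumR n G.
Proof.
induction n as [|n IH]; intros H; simpl; auto.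
rewrite IH; [|intros; apply H; lia]. rewrite (H n); [reflexivity|lia].
Qed.

Lemma sumR_eq0 n F : (forall i, (i < n)%nat -> F i = 0) -> sumR n F = 0.
Proof.
intros H. rewrite (sumR_ext n F (fun _ => 0)); auto.
clear H. induction n; simpl; [reflexivity|]. rewrite IHn; ring.
Qed.

Lemma sumR_le n F G : (forall i, (i < n)%nat -> F i <= G i) -> sumR n F <= sumR n G.
Proof.
induction n as [|n IH]; intros H; simpl; [lra|].
apply Rplus_le_compat; [apply IH; intros|]; apply H; lia.
Qed.

Lemma sumR_ge0 n F : (forall i, (i < n)%nat -> 0 <= F i) -> 0 <= sumR n F.
Proof. intros H. rewrite -(sumR_eq0 n (fun _ => 0)) //. by apply sumR_le. Qed.

Lemma sumR_mull n k F : sumR n (fun i => k * F i) = k * sumR n F.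
Proof. induction n; simpl; [ring|]. rewrite IHn; ring. Qed.

Lemma sumR_kronecker n (x : nat -> R) j : (j < n)%nat ->
  sumR n (fun i => x i * (if Nat.eqb i j then 1 else 0)) = x j.
Proof.
induction n as [|n IH]; intros Hj; [lia|]. simpl.
destruct (Nat.eq_dec j n) as [->|Hne].
- rewrite Nat.eqb_refl sumR_eq0; [ring|].
  intros i Hi. replace (Nat.eqb i n) with false by (symmetry; apply Nat.eqb_neq; lia). ring.
- rewrite IH; [|lia]. replace (Nat.eqb n j) with false by (symmetry; apply Nat.eqb_neq; lia). ring.
Qed.

Section MatrixSolve.
Import all_boot all_algebra Rstruct GRing.Theory.
Local Open Scope ring_scope.

Lemma big_ord_sumR n (F : nat -> R) : \sum_(j < n) F (nat_of_ord j) = sumR n F.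
Proof.
rewrite -(big_mkord xpredT F).
elim: n => [|n IH]; first by rewrite big_geq.
by rewrite big_nat_recr //= IH.
Qed.

(* Trivial kernel makes the coefficient matrix invertible. *)
Lemma square_system_solvable (n : nat) (a : nat -> nat -> R) :
  (forall x : nat -> R,
     (forall i, (i < n)%coq_nat -> sumR n (fun j => Rmult (a i j) (x j)) = 0%R) ->
     forall j, (j < n)%coq_nat -> x j = 0%R) ->
  forall c : nat -> R, exists x : nat -> R,
    forall i, (i < n)%coq_nat -> sumR n (fun j => Rmult (a i j) (x j)) = c i.
Proof.
case: n a => [|m] a Hker c; first by exists (fun _ => 0%R) => i /ltP.
pose A : 'M[R]_(m.+1) := \matrix_(i, j) a (nat_of_ord i) (nat_of_ord j).
have A_unit : A \in unitmx.
  rewrite -unitmx_tr -row_free_unit -kermx_eq0.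
  apply/rowV0P => v /sub_kermxP vA0.
  apply/matrixP => i0 j; rewrite ord1 mxE.
  have := Hker (fun k => v 0 (inord k)) _ j (ltP (ltn_ord j)).
  rewrite inord_val; apply => i /ltP lt_i.
  have vAi0 := congr1 (fun B : 'M[R]_(1, m.+1) => B 0 (inord i)) vA0.
  rewrite /= !mxE in vAi0; rewrite -big_ord_sumR -[RHS]vAi0.
  by apply: eq_bigr => k _; rewrite !mxE inord_val inordK // mulrC.
pose C : 'cV[R]_(m.+1) := \col_i c (nat_of_ord i).
exists (fun k => (invmx A *m C) (inord k) 0) => i /ltP lt_i.
have := congr1 (fun B : 'M[R]_(m.+1, 1) => B (inord i) 0) (mulKVmx A_unit C).
rewrite !mxE inordK // => <-.
by rewrite -big_ord_sumR; apply: eq_bigr => k _; rewrite !mxE inord_val inordK.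
Qed.

End MatrixSolve.

Section InnerSpaceFacts.
Variable X : InnerSpace.
Implicit Types u v w : X.

Lemma ips_add0l u : ips_add ips_zero u = u.
Proof. by rewrite ips_addC ips_add0. Qed.

Lemma ips_addIl u v w : ips_add u v = ips_add u w -> v = w.
Proof.
intros H.
rewrite -(ips_add0l v) -(ips_add0l w) -(ips_addN _ u) (ips_addC _ u (ips_opp u)).
by rewrite -!ips_addA H.
Qed.

Lemma ips_scal0l u : ips_scal 0 u = ips_zero.
Proof.
apply (ips_addIl (ips_scal 0 u)).
rewrite -ips_scalDl ips_add0 Rplus_0_l. reflexivity.
Qed.

Lemma ips_scal0r a : ips_scal a (@ips_zero X) = ips_zero.
Proof. by rewrite -(ips_scal0l ips_zero) ips_scalA Rmult_0_r. Qed.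

Lemma ips_oppE u : ips_opp u = ips_scal (-1) u.
Proof.
apply (ips_addIl u). rewrite ips_addN -{1}(ips_scal1 _ u) -ips_scalDl.
by rewrite Rplus_opp_r ips_scal0l.
Qed.

Lemma vsub_eq0 u v : vsub u v = ips_zero -> u = v.
Proof.
rewrite /vsub => H.
by rewrite -(ips_add0 _ u) -(ips_addN _ v) (ips_addC _ v) ips_addA H ips_add0l.
Qed.

Lemma vsubKl u v : ips_add u (vsub v u) = v.
Proof. by rewrite /vsub (ips_addC _ v) ips_addA ips_addN ips_add0l. Qed.

Lemma vsubvv u : vsub u u = ips_zero.
Proof. apply ips_addN. Qed.

Lemma vsub_scal a u v : vsub (ips_scal a u) (ips_scal a v) = ips_scal a (vsub u v).
Proof. by rewrite /vsub !ips_oppE ips_scalDr !ips_scalA Rmult_comm. Qed.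

Lemma ips_ipDr u v w : ips_ip u (ips_add v w) = ips_ip u v + ips_ip u w.
Proof. by rewrite ips_ipC ips_ipD (ips_ipC _ v) (ips_ipC _ w). Qed.

Lemma ips_ipZr a u v : ips_ip u (ips_scal a v) = a * ips_ip u v.
Proof. by rewrite ips_ipC ips_ipZ (ips_ipC _ v). Qed.

Lemma ips_ip0l w : ips_ip ips_zero w = 0.
Proof. by rewrite -(ips_scal0l ips_zero) ips_ipZ Rmult_0_l. Qed.

Lemma ips_ip0r w : ips_ip w ips_zero = 0.
Proof. by rewrite ips_ipC ips_ip0l. Qed.

Lemma ips_ip_vsubl u v w : ips_ip (vsub u v) w = ips_ip u w - ips_ip v w.
Proof. rewrite /vsub ips_ipD ips_oppE ips_ipZ. ring. Qed.

Lemma Cauchy_Schwarz u v : ips_ip u v * ips_ip u v <= ips_ip u u * ips_ip v v.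
Proof.
destruct (Req_dec (ips_ip v v) 0) as [Hv0|Hv0].
- apply ips_ip_eq0 in Hv0. subst v. rewrite ips_ip0r ips_ip0l. lra.
- pose proof (ips_ip_ge0 _ v) as Hv.
  set (t := ips_ip u v / ips_ip v v).
  pose proof (ips_ip_ge0 _ (ips_add u (ips_scal (- t) v))) as Hsq.
  rewrite ips_ipD !ips_ipDr !ips_ipZ !ips_ipZr (ips_ipC _ v u) in Hsq.
  assert (Ht : t * ips_ip v v = ips_ip u v) by (unfold t; field; lra).
  nra.
Qed.

Lemma vnorm_ge0 u : 0 <= vnorm u.
Proof. apply sqrt_pos. Qed.

Lemma vnorm_sqr u : vnorm u * vnorm u = ips_ip u u.
Proof. apply sqrt_sqrt, ips_ip_ge0. Qed.

Lemma vnorm0 : vnorm (@ips_zero X) = 0.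
Proof. by rewrite /vnorm ips_ip0l sqrt_0. Qed.

Lemma vnorm_eq0 u : vnorm u = 0 -> u = ips_zero.
Proof. intros H. apply ips_ip_eq0. rewrite -vnorm_sqr H. ring. Qed.

Lemma Cauchy_Schwarz_abs u v : Rabs (ips_ip u v) <= vnorm u * vnorm v.
Proof.
rewrite /vnorm -sqrt_mult; try apply ips_ip_ge0.
rewrite -sqrt_Rsqr_abs. apply sqrt_le_1_alt, Cauchy_Schwarz.
Qed.

Lemma vnorm_scal a u : vnorm (ips_scal a u) = Rabs a * vnorm u.
Proof.
rewrite /vnorm ips_ipZ ips_ipZr -Rmult_assoc -sqrt_Rsqr_abs -sqrt_mult //.
- apply Rle_0_sqr.
- apply ips_ip_ge0.
Qed.

Lemma vnorm_triangle u v : vnorm (ips_add u v) <= vnorm u + vnorm v.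
Proof.
pose proof (vnorm_ge0 u); pose proof (vnorm_ge0 v).
rewrite -(sqrt_Rsqr (vnorm u + vnorm v)); [|lra].
apply sqrt_le_1_alt.
rewrite ips_ipD !ips_ipDr (ips_ipC _ v u) /Rsqr -(vnorm_sqr u) -(vnorm_sqr v).
pose proof (Cauchy_Schwarz_abs u v). pose proof (Rle_abs (ips_ip u v)). nra.
Qed.

Lemma vnorm_le_vsub u v : vnorm u <= vnorm v + vnorm (vsub u v).
Proof. rewrite -{1}(vsubKl v u). apply vnorm_triangle. Qed.

End InnerSpaceFacts.

Fixpoint sumv {X : InnerSpace} (n : nat) (F : nat -> X) : X :=
  match n with O => ips_zero | S m => ips_add (sumv m F) (F m) end.

Definition comb {X : InnerSpace} n (b : nat -> X) (x : nat -> R) : X :=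
  sumv n (fun j => ips_scal (x j) (b j)).

Definition proj {X : InnerSpace} n (b : nat -> X) (v : X) : X :=
  comb n b (fun j => ips_ip v (b j)).

Definition orthonormal {X : InnerSpace} n (b : nat -> X) : Prop :=
  forall i j, (i < n)%nat -> (j < n)%nat ->
    ips_ip (b i) (b j) = if Nat.eqb i j then 1 else 0.

Definition onb {X : InnerSpace} n (b : nat -> X) : Prop :=
  orthonormal n b /\ forall v, proj n b v = v.

Section Orthonormal.
Variable X : InnerSpace.
Implicit Types (u v w : X) (b : nat -> X).

Lemma sumv_ext n (F G : nat -> X) :
  (forall i, (i < n)%nat -> F i = G i) -> sumv n F = sumv n G.
Proof.
induction n as [|n IH]; intros H; simpl; auto.
rewrite IH; [|intros; apply H; lia]. rewrite (H n); [reflexivity|lia].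
Qed.

Lemma sumvD n (F G : nat -> X) :
  sumv n (fun i => ips_add (F i) (G i)) = ips_add (sumv n F) (sumv n G).
Proof.
induction n; simpl; [by rewrite ips_add0|]. rewrite IHn -!ips_addA.
f_equal. rewrite !ips_addA. f_equal. apply ips_addC.
Qed.

Lemma sumvZ n a (F : nat -> X) :
  sumv n (fun i => ips_scal a (F i)) = ips_scal a (sumv n F).
Proof. induction n; simpl; [by rewrite ips_scal0r|]. by rewrite IHn ips_scalDr. Qed.

Lemma vnorm_sumv_le n (F : nat -> X) : vnorm (sumv n F) <= sumR n (fun i => vnorm (F i)).
Proof.
induction n; simpl; [rewrite vnorm0; lra|].
eapply Rle_trans; [apply vnorm_triangle|lra].
Qed.

Lemma ips_ip_combl n b x e :
  ips_ip (comb n b x) e = sumR n (fun j => x j * ips_ip (b j) e).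
Proof. induction n; simpl; [apply ips_ip0l|]. by rewrite ips_ipD IHn ips_ipZ. Qed.

Lemma orthonormal_coord n b x j : orthonormal n b -> (j < n)%nat ->
  ips_ip (comb n b x) (b j) = x j.
Proof.
intros Hon Hj. rewrite ips_ip_combl -(sumR_kronecker n x j Hj).
apply sumR_ext => i Hi. by rewrite Hon.
Qed.

Lemma orthonormal_vnorm n b i : orthonormal n b -> (i < n)%nat -> vnorm (b i) = 1.
Proof. intros Hon Hi. by rewrite /vnorm Hon // Nat.eqb_refl sqrt_1. Qed.

Lemma projD n b u v : proj n b (ips_add u v) = ips_add (proj n b u) (proj n b v).
Proof. rewrite /proj /comb -sumvD. apply sumv_ext => i _. by rewrite ips_ipD ips_scalDl. Qed.

Lemma projZ n b a u : proj n b (ips_scal a u) = ips_scal a (proj n b u).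
Proof. rewrite /proj /comb -sumvZ. apply sumv_ext => i _. by rewrite ips_ipZ ips_scalA. Qed.

Lemma proj0 n b : proj n b (@ips_zero X) = ips_zero.
Proof. by rewrite -{1}(ips_scal0l X ips_zero) projZ ips_scal0l. Qed.

Lemma proj_orthogonal n b u e : (forall i, (i < n)%nat -> ips_ip (b i) e = 0) ->
  ips_ip (proj n b u) e = 0.
Proof.
intros H. rewrite ips_ip_combl. apply sumR_eq0 => i Hi. rewrite H //. ring.
Qed.

Lemma onb_coord_inj n b u v : onb n b ->
  (forall i, (i < n)%nat -> ips_ip u (b i) = ips_ip v (b i)) -> u = v.
Proof.
intros [_ Hb] H. rewrite -(Hb u) -(Hb v). apply sumv_ext => i Hi. by rewrite H.
Qed.

Definition extend_family n b e : nat -> X := fun i => if Nat.eqb i n then e else b i.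

Lemma proj_extend_family n b e u :
  proj (S n) (extend_family n b e) u = ips_add (proj n b u) (ips_scal (ips_ip u e) e).
Proof.
rewrite /proj /comb /= /extend_family Nat.eqb_refl. f_equal.
apply sumv_ext => i Hi. by replace (Nat.eqb i n) with false by (symmetry; apply Nat.eqb_neq; lia).
Qed.

Lemma orthonormal_extend_family n b e : orthonormal n b ->
  (forall i, (i < n)%nat -> ips_ip (b i) e = 0) -> ips_ip e e = 1 ->
  orthonormal (S n) (extend_family n b e).
Proof.
intros Hon He Hee i j Hi Hj. rewrite /extend_family.
destruct (Nat.eqb_spec i n) as [->|Hin]; destruct (Nat.eqb_spec j n) as [->|Hjn].
- by rewrite Nat.eqb_refl.
- rewrite ips_ipC He; [|lia]. by replace (Nat.eqb n j) with false by (symmetry; apply Nat.eqb_neq; lia).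
- rewrite He; [|lia]. by replace (Nat.eqb i n) with false by (symmetry; apply Nat.eqb_neq; lia).
- apply Hon; lia.
Qed.

Lemma Gram_Schmidt (l : list X) :
  exists n b, orthonormal n b /\ forall a, In a l -> proj n b a = a.
Proof.
induction l as [|a l IH].
- exists O, (fun _ => ips_zero). split; [intros i j Hi; lia|]. intros a [].
- destruct IH as [n [b [Hon Hfix]]].
  set (w := vsub a (proj n b a)).
  destruct (classic (w = ips_zero)) as [Hw|Hw].
  { exists n, b. split; auto. intros x [<-|Hx]; auto. symmetry. by apply vsub_eq0. }
  set (nw := vnorm w).
  assert (Hnw : 0 < nw).
  { destruct (vnorm_ge0 X w) as [H|H]; auto. exfalso. by apply Hw, vnorm_eq0. }
  set (e := ips_scal (/ nw) w).
  assert (Hbe : forall i, (i < n)%nat -> ips_ip (b i) e = 0).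
  { intros i Hi. rewrite ips_ipZr ips_ipC ips_ip_vsubl orthonormal_coord //. ring. }
  assert (Hwe : ips_ip w e = nw).
  { rewrite ips_ipZr -vnorm_sqr -/nw. field. lra. }
  assert (Hee : ips_ip e e = 1).
  { rewrite {1}/e ips_ipZ Hwe. field. lra. }
  exists (S n), (extend_family n b e). split.
  { by apply orthonormal_extend_family. }
  intros x [<-|Hx]; rewrite proj_extend_family.
  + assert (Hae : ips_ip a e = nw).
    { by rewrite -{1}(vsubKl X (proj n b a) a) -/w ips_ipD proj_orthogonal // Hwe Rplus_0_l. }
    by rewrite Hae ips_scalA Rinv_r ?ips_scal1 ?vsubKl; [|lra].
  + assert (Hxe : ips_ip x e = 0) by (rewrite -(Hfix x Hx); by apply proj_orthogonal).
    by rewrite Hfix // Hxe ips_scal0l ips_add0.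
Qed.

Lemma proj_span_fixed n b (cs : list R) (bs : list X) :
  (forall a, In a bs -> proj n b a = a) ->
  let v := fold_right (fun p acc => ips_add (ips_scal (fst p) (snd p)) acc)
                      ips_zero (combine cs bs) in proj n b v = v.
Proof.
revert cs. induction bs as [|a bs IH]; intros [|c cs] H; simpl; try apply proj0.
rewrite projD projZ H; [|by left]. f_equal. apply IH => a' Ha'. apply H; by right.
Qed.

Lemma onb_exists : exists n b, onb n b.
Proof.
destruct (ips_findim X) as [bs Hbs].
destruct (Gram_Schmidt bs) as [n [b [Hon Hfix]]].
exists n, b. split; auto. intros v. destruct (Hbs v) as [cs [_ ->]].
by apply proj_span_fixed.
Qed.

End Orthonormal.

Section LinearMaps.
Variables X Y Z : InnerSpace.

Lemma linear0 (f : X -> Y) : is_linear f -> f ips_zero = ips_zero.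
Proof. intros [_ fZ]. by rewrite -(ips_scal0l X ips_zero) fZ ips_scal0l. Qed.

Lemma linear_vsub (f : X -> Y) u v : is_linear f -> f (vsub u v) = vsub (f u) (f v).
Proof. intros [fD fZ]. by rewrite /vsub fD !ips_oppE fZ. Qed.

Lemma linear_comb (f : X -> Y) n b x : is_linear f ->
  f (comb n b x) = comb n (fun j => f (b j)) x.
Proof.
intros Hf. rewrite /comb. induction n; simpl; [by apply linear0|].
destruct Hf as [fD fZ]. by rewrite fD IHn fZ.
Qed.

Lemma is_linear_comp (f : Y -> Z) (g : X -> Y) :
  is_linear f -> is_linear g -> is_linear (fun v => f (g v)).
Proof. intros [fD fZ] [gD gZ]. split; intros; by rewrite ?gD ?fD ?gZ ?fZ. Qed.

Lemma is_linear_vsub (f g : X -> Y) :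
  is_linear f -> is_linear g -> is_linear (fun v => vsub (f v) (g v)).
Proof.
intros [fD fZ] [gD gZ]. split; intros.
- rewrite fD gD /vsub ips_oppE ips_scalDr -!ips_oppE -!ips_addA. f_equal.
  rewrite ips_addC -!ips_addA. f_equal. apply ips_addC.
- by rewrite fZ gZ vsub_scal.
Qed.

Lemma linear_injective (f : X -> Y) : is_linear f ->
  (forall v, f v = ips_zero -> v = ips_zero) -> forall v1 v2, f v1 = f v2 -> v1 = v2.
Proof.
intros Hf Hker v1 v2 H. apply vsub_eq0, Hker. by rewrite linear_vsub // H vsubvv.
Qed.

Lemma linear_bounded (f : X -> Y) : is_linear f ->
  exists K, 0 <= K /\ forall v, vnorm (f v) <= K * vnorm v.
Proof.
intros Hf. destruct (onb_exists X) as [n [b [Hon Hb]]].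
exists (sumR n (fun i => vnorm (f (b i)))). split.
{ apply sumR_ge0 => i _. apply vnorm_ge0. }
intros v. rewrite -{1}(Hb v) /proj linear_comb //.
eapply Rle_trans; [apply vnorm_sumv_le|].
rewrite Rmult_comm -sumR_mull. apply sumR_le => i Hi.
rewrite vnorm_scal. apply Rmult_le_compat_r; [apply vnorm_ge0|].
eapply Rle_trans; [apply Cauchy_Schwarz_abs|]. rewrite (orthonormal_vnorm X n b) //. lra.
Qed.

End LinearMaps.

(* Finite dimensionality: in an orthonormal basis [f] becomes a square matrix
   with trivial kernel. *)
Lemma linear_surjective (X : InnerSpace) (f : X -> X) : is_linear f ->
  (forall v, f v = ips_zero -> v = ips_zero) -> forall w, exists v, f v = w.
Proof.
intros Hf Hker w. destruct (onb_exists X) as [n [b Hb]].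
have Hfcoord : forall x i, ips_ip (f (comb n b x)) (b i) =
                          sumR n (fun j => ips_ip (f (b j)) (b i) * x j).
{ intros x i. rewrite linear_comb // ips_ip_combl. apply sumR_ext => j _. ring. }
destruct (square_system_solvable n (fun i j => ips_ip (f (b j)) (b i)))
  with (c := fun i => ips_ip w (b i)) as [x Hx].
- intros x Hx j Hj.
  have Hfx0 : f (comb n b x) = ips_zero.
  { apply (onb_coord_inj X n b) => // i Hi. by rewrite Hfcoord ips_ip0l Hx. }
  by rewrite -(orthonormal_coord X n b x j (proj1 Hb) Hj) (Hker _ Hfx0) ips_ip0l.
- exists (comb n b x). apply (onb_coord_inj X n b) => // i Hi. by rewrite Hfcoord Hx.
Qed.

Lemma bounded_below_kernel (X Y : InnerSpace) (f : X -> Y) k : 0 < k ->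
  (forall v, k * vnorm v <= vnorm (f v)) -> forall v, f v = ips_zero -> v = ips_zero.
Proof.
intros Hk Hf v Hv. apply vnorm_eq0. specialize (Hf v). rewrite Hv vnorm0 in Hf.
pose proof (vnorm_ge0 X v). nra.
Qed.

Lemma is_inverse_exists (X Y : InnerSpace) (f : X -> Y) :
  (forall v1 v2, f v1 = f v2 -> v1 = v2) -> (forall w, exists v, f v = w) ->
  exists L, is_inverse f L.
Proof.
intros Hinj Hsurj.
exists (fun w => proj1_sig (constructive_indefinite_description _ (Hsurj w))).
split=> [v|w]; [apply Hinj|]; exact (proj2_sig (constructive_indefinite_description _ (Hsurj _))).
Qed.

Section OperatorNorm.
Variables X Y : InnerSpace.

Lemma opnorm_exists (f : X -> Y) K : 0 <= K ->
  (forall v, vnorm (f v) <= K * vnorm v) -> exists r, is_opnorm f r /\ r <= K.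
Proof.
intros HK Hf.
set (S := fun a => exists v : X, vnorm v <= 1 /\ a = vnorm (f v)).
assert (HSK : is_upper_bound S K).
{ intros a [v [Hv ->]]. eapply Rle_trans; [apply Hf|]. pose proof (vnorm_ge0 X v). nra. }
assert (HS : exists a, S a).
{ exists (vnorm (f ips_zero)), ips_zero. rewrite vnorm0. split; auto; lra. }
destruct (completeness S (ex_intro _ K HSK) HS) as [r Hr].
exists r. split; [exact Hr|]. by apply Hr.
Qed.

Lemma linear_opnorm_exists (f : X -> Y) : is_linear f -> exists r, is_opnorm f r.
Proof.
intros Hf. destruct (linear_bounded X Y f Hf) as [K [HK Hfk]].
destruct (opnorm_exists f K HK Hfk) as [r [Hr _]]. by exists r.
Qed.

Lemma opnorm_ge0 (f : X -> Y) r : is_opnorm f r -> 0 <= r.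
Proof.
intros [Hub _]. eapply Rle_trans; [apply (vnorm_ge0 _ (f ips_zero))|].
apply Hub. exists ips_zero. rewrite vnorm0. split; auto; lra.
Qed.

Lemma opnorm_le (f : X -> Y) r : is_linear f -> is_opnorm f r ->
  forall v, vnorm (f v) <= r * vnorm v.
Proof.
intros [_ fZ] Hr v. pose proof (opnorm_ge0 f r Hr).
destruct (vnorm_ge0 X v) as [Hv|Hv].
- have Hu : vnorm (f (ips_scal (/ vnorm v) v)) <= r.
  { apply Hr. exists (ips_scal (/ vnorm v) v). split; auto.
    rewrite vnorm_scal Rabs_right; [right; field; lra|].
    left; apply Rinv_0_lt_compat; lra. }
  rewrite fZ vnorm_scal Rabs_right in Hu; [|left; apply Rinv_0_lt_compat; lra].
  apply Rmult_le_reg_l with (/ vnorm v); [apply Rinv_0_lt_compat; lra|].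
  by rewrite -Rmult_assoc (Rmult_comm _ r) Rmult_assoc Rinv_l ?Rmult_1_r; [|lra].
- rewrite -Hv. symmetry in Hv. apply vnorm_eq0 in Hv. subst v.
  rewrite -{1}(ips_scal0l X ips_zero) fZ ips_scal0l vnorm0. lra.
Qed.

End OperatorNorm.

Lemma is_lub_ge0 (S : R -> Prop) r : is_lub S r -> (forall a, S a -> 0 <= a) -> 0 <= r.
Proof.
intros [Hub Hleast] HS. destruct (Rle_or_lt 0 r) as [|Hr]; auto.
have Hempty : is_upper_bound S (r - 1).
{ intros a Ha. pose proof (HS a Ha). pose proof (Hub a Ha). lra. }
pose proof (Hleast _ Hempty). lra.
Qed.

Lemma is_esup_ele (S : R -> Prop) e a : is_esup S e -> S a -> ele (EFin a) e.
Proof. destruct e; simpl; auto. intros [Hub _]. apply Hub. Qed.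

Lemma ele_EFin_trans a a' e : a <= a' -> ele (EFin a') e -> ele (EFin a) e.
Proof. destruct e; simpl; auto. lra. Qed.

Lemma ele_ediv a e d : 0 < d -> ele (EFin a) e -> ele (EFin (a / d)) (ediv e d).
Proof.
destruct e; simpl; auto. intros Hd Ha.
apply Rmult_le_compat_r; [left; apply Rinv_0_lt_compat|]; lra.
Qed.

Lemma ele_emul k a e : 0 <= k -> ele (EFin a) e -> ele (EFin (k * a)) (emul (EFin k) e).
Proof.
destruct e; simpl; [intros; by apply Rmult_le_compat_l|].
destruct (Req_EM_T k 0) as [->|]; simpl; auto. intros. lra.
Qed.

Section PseudoRepresentation.
Variables (M : Type) (G : Groupoid M) (E : M -> InnerSpace)
          (lam : forall x y : M, Hom G x y -> E x -> E y).
Hypothesis lam_linear : forall x y (g : Hom G x y), is_linear (lam x y g).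
Hypothesis lam_unital : forall x v, lam x x (gid x) v = v.
Variable c : R.
Hypothesis c_lub : is_lub (c_set E lam) c.
Hypothesis c_lt1 : c < 1.

Lemma c_ge0 : 0 <= c.
Proof. apply (is_lub_ge0 _ _ c_lub) => a [x [y [z [g [g' Ha]]]]]. exact: opnorm_ge0 Ha. Qed.

Lemma defect_le x y z (g : Hom G x y) (g' : Hom G y z) v :
  vnorm (vsub (lam x z (gcomp g' g) v) (lam y z g' (lam x y g v))) <= c * vnorm v.
Proof.
have D_linear := is_linear_vsub _ _ _ _ (lam_linear _ _ (gcomp g' g))
                   (is_linear_comp _ _ _ _ _ (lam_linear _ _ g') (lam_linear _ _ g)).
destruct (linear_opnorm_exists _ _ _ D_linear) as [r Hr].
have Hrc : r <= c by apply c_lub; exists x, y, z, g, g'.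
eapply Rle_trans; [exact: opnorm_le D_linear Hr v|].
apply Rmult_le_compat_r; [apply vnorm_ge0|exact Hrc].
Qed.

Lemma lam_retraction_ge x y (g : Hom G x y) (g' : Hom G y x) :
  gcomp g' g = gid x -> forall v, (1 - c) * vnorm v <= vnorm (lam y x g' (lam x y g v)).
Proof.
intros Hg'g v. have Hdef := defect_le x y x g g' v.
rewrite Hg'g lam_unital in Hdef.
pose proof (vnorm_le_vsub _ v (lam y x g' (lam x y g v))). lra.
Qed.

Lemma lam_injective x y (g : Hom G x y) v1 v2 : lam x y g v1 = lam x y g v2 -> v1 = v2.
Proof.
intros H. apply (linear_injective _ _ (fun v => lam y x (ginv g) (lam x y g v))).
- apply is_linear_comp; apply lam_linear.
- apply (bounded_below_kernel _ _ _ (1 - c)); [lra|].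
  apply lam_retraction_ge, gcompVl.
- by rewrite H.
Qed.

Lemma lam_surjective x y (g : Hom G x y) w : exists v, lam x y g v = w.
Proof.
destruct (linear_surjective _ (fun v => lam x y g (lam y x (ginv g) v))) with (w := w)
  as [v Hv].
- apply is_linear_comp; apply lam_linear.
- apply (bounded_below_kernel _ _ _ (1 - c)); [lra|].
  apply lam_retraction_ge, gcompVr.
- by exists (lam y x (ginv g) v).
Qed.

Lemma lam_invertible x y (g : Hom G x y) : exists L, is_inverse (lam x y g) L.
Proof. apply is_inverse_exists; [apply lam_injective|apply lam_surjective]. Qed.

(* [(1 - c) |L w| <= |lam g^-1 (lam g (L w))| = |lam g^-1 w|]. *)
Lemma lam_inverse_le x y (g : Hom G x y) L r :
  is_inverse (lam x y g) L -> is_opnorm (lam y x (ginv g)) r ->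
  forall w, vnorm (L w) <= r / (1 - c) * vnorm w.
Proof.
intros [_ HLr] Hr w.
have Hlow := lam_retraction_ge x y g (ginv g) (gcompVl _ _ _ _ g) (L w).
rewrite HLr in Hlow.
have Hup := opnorm_le _ _ _ _ (lam_linear _ _ _) Hr w.
apply Rmult_le_reg_l with (1 - c); [lra|].
replace ((1 - c) * (r / (1 - c) * vnorm w)) with (r * vnorm w) by (field; lra).
lra.
Qed.

Lemma lam_inverse_opnorm x y (g : Hom G x y) L r :
  is_inverse (lam x y g) L -> is_opnorm (lam y x (ginv g)) r ->
  exists rL, is_opnorm L rL /\ rL <= r / (1 - c).
Proof.
intros HL Hr. apply opnorm_exists; [|exact: lam_inverse_le HL Hr].
apply Rle_mult_inv_pos; [exact: opnorm_ge0 Hr|lra].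
Qed.

(* [w = lam h (Lh w)] and [g = (g h^-1) h] turn [Delta(g, h) w] into a defect at [Lh w]. *)
Lemma DeltaL_opnorm x y z (g : Hom G x y) (h : Hom G x z) Lh r :
  is_inverse (lam x z h) Lh -> is_opnorm (lam z x (ginv h)) r ->
  exists rD, is_opnorm (DeltaL E lam g h Lh) rD /\ rD <= c * (r / (1 - c)).
Proof.
intros HLh Hr. apply opnorm_exists.
{ apply Rmult_le_pos; [exact c_ge0|]. apply Rle_mult_inv_pos; [exact: opnorm_ge0 Hr|lra]. }
intros w.
have Hg : gcomp (gcomp g (ginv h)) h = g by rewrite -gcompA gcompVl gcomp1r.
have Hdef := defect_le x z y h (gcomp g (ginv h)) (Lh w).
rewrite Hg (proj2 HLh) in Hdef.
eapply Rle_trans; [exact Hdef|]. rewrite Rmult_assoc.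
apply Rmult_le_compat_l; [exact c_ge0|]. exact: lam_inverse_le HLh Hr w.
Qed.

End PseudoRepresentation.

Theorem mainTheorem14 :
  forall (M : Type) (G : Groupoid M) (E : M -> InnerSpace)
         (lam : forall x y : M, Hom G x y -> E x -> E y),
    (forall (x y : M) (g : Hom G x y), is_linear (lam x y g)) ->
    (forall (x : M) (v : E x), lam x x (gid x) v = v) ->
    forall (b : ereal) (c : R),
      is_esup (b_set E lam) b ->
      is_lub (c_set E lam) c ->
      c < 1 ->
      (forall (x y : M) (g : Hom G x y),
          exists L : E y -> E x, is_inverse (lam x y g) L /\
            exists r, is_opnorm L r /\ ele (EFin r) (ediv b (1 - c)))
      /\
      (forall (x y z : M) (g : Hom G x y) (h : Hom G x z) (Lh : E z -> E x),
          is_inverse (lam x z h) Lh ->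
          exists r, is_opnorm (DeltaL E lam g h Lh) r /\
            ele (EFin r) (emul (EFin c) (ediv b (1 - c)))).
Proof.
intros M G E lam Hlin Hunit b c Hb Hc Hc1.
have lam_inv_opnorm : forall x y (g : Hom G x y),
    exists r, is_opnorm (lam y x (ginv g)) r /\ ele (EFin r) b.
{ intros x y g. destruct (linear_opnorm_exists _ _ _ (Hlin y x (ginv g))) as [r Hr].
  exists r. split; [exact Hr|]. apply (is_esup_ele _ _ _ Hb). by exists y, x, (ginv g). }
split.
- intros x y g.
  destruct (lam_invertible M G E lam Hlin Hunit c Hc Hc1 x y g) as [L HL].
  destruct (lam_inv_opnorm x y g) as [r [Hr Hrb]].
  destruct (lam_inverse_opnorm M G E lam Hlin Hunit c Hc Hc1 x y g L r HL Hr) as [rL [HrL HrLr]].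
  exists L. split; [exact HL|]. exists rL. split; [exact HrL|].
  apply (ele_EFin_trans _ _ _ HrLr), ele_ediv; [lra|exact Hrb].
- intros x y z g h Lh HLh.
  destruct (lam_inv_opnorm x z h) as [r [Hr Hrb]].
  destruct (DeltaL_opnorm M G E lam Hlin Hunit c Hc Hc1 x y z g h Lh r HLh Hr) as [rD [HrD HrDr]].
  exists rD. split; [exact HrD|].
  apply (ele_EFin_trans _ _ _ HrDr), ele_emul; [exact: c_ge0 Hc|].
  apply ele_ediv; [lra|exact Hrb].
Qed.
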